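(* Let $\mathcal{G}$ and $\mathcal{S}$ be the gauge group and stabilizer group of a translation invariant (TI) Pauli topological subsystem code defined on an $L\times L$ torus, and let $\ell_S$ be the stabilizer locality length from property (iii) of the definition. Then for every region $R$ of the torus whose linear size is less than $L-\ell_S$, $$\mathcal{Z}_{\mathcal{P}}(\tilde{\mathcal{S}}_R)\cap\mathcal{P}(R)\ \propto\ \mathcal{G}(R),$$ i.e. every Pauli operator supported in $R$ that commutes with all truncations to $R$ of locally generated stabilizers is, up to a phase, a gauge operator supported in $R$, and conversely.
   Context: Qudits: a qudit of dimension $N$ has basis $|\alpha\rangle$, $\alpha\in\mathbb{Z}_N$, with $X=\sum_\alpha|\alpha+1\rangle\langle\alpha|$, $Z=\sum_\alpha\omega^\alpha|\alpha\rangle\langle\alpha|$, $\omega=e^{2\pi i/N}$; qudit dimensions may be composite. The Pauli group $\mathcal{P}$ consists of all finite products of single-site Pauli operators times phases; the support of a Pauli operator is the set of sites where it acts non-identically. For a group $\mathcal{T}$, $\mathcal{Z}_{\mathcal{P}}(\mathcal{T})$ is its centralizer in $\mathcal{P}$ and $\mathcal{Z}(\mathcal{T})$ its center; ''$\propto$'' means equality up to phases. A subsystem code is given by a gauge group $\mathcal{G}\le\mathcal{P}$ (containing all $U(1)$ phases) and a stabilizer group $\mathcal{S}$ (abelian, containing no nontrivial multiple of the identity) with $\mathcal{Z}(\mathcal{G})\propto\mathcal{S}$. A two-dimensional TI topological subsystem code is a subsystem code on a 2D lattice such that: (i) every translate of a gauge operator is a gauge operator; (ii) $\mathcal{G}$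 has a generating set of operators with support of linear size less than a constant $\ell_G$; (iii) on the infinite plane, $\mathcal{S}$ has a generating set of operators with support of linear size less than a constant $\ell_S$, and $\mathcal{Z}_{\mathcal{P}}(\mathcal{S})\propto\mathcal{G}$. On the torus, $\tilde{\mathcal{S}}\le\mathcal{S}$ denotes the subgroup generated by local stabilizers (those with support of linear size less than $\ell_S$). For a region $R$: $\mathcal{P}(R)$ is the group of Pauli operators supported in $R$; $\mathcal{G}(R)=\mathcal{G}\cap\mathcal{P}(R)$; $\tilde{\mathcal{S}}_R$ is the group of restrictions (truncations) to $R$ of elements of $\tilde{\mathcal{S}}$. *)

(* Pauli operators are modelled MODULO PHASES as integer
   exponent vectors (X- and Z-exponents of every qudit at every site),
   read modulo the qudit dimension. *)
From HB Require Import structures.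
From mathcomp Require Import all_boot all_order all_algebra.
Set Implicit Arguments. Unset Strict Implicit. Unset Printing Implicit Defensive.
Import Order.TTheory GRing.Theory Num.Theory.
Local Open Scope ring_scope.

(* Each site carries k qudits; qudit j has dimension d j.
   A Pauli operator (mod phase) on site type T assigns to site t, qudit j,
   the exponent of X (b = false) and of Z (b = true):
     P = prod_{t,j} X_{t,j}^{P t j false} Z_{t,j}^{P t j true}. *)
Definition pauli (T : Type) (k : nat) := T -> 'I_k -> bool -> int.

Section Pauli.
Variables (k : nat) (d : 'I_k -> nat).

Definition peq (T : Type) (P Q : pauli T k) : Prop :=
  forall t j b, (P t j b == Q t j b %[mod (d j)%:Z])%Z.

Definition in_supp (T : Type) (P : pauli T k) (t : T) : Prop :=
  exists j b, ~~ ((d j)%:Z %| P t j b)%Z.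

Definition supp_in (T : Type) (P : pauli T k) (R : T -> Prop) : Prop :=
  forall t, in_supp P t -> R t.

Definition gen (T : Type) (A : pauli T k -> Prop) (P : pauli T k) : Prop :=
  exists (n : nat) (c : 'I_n -> int) (h : 'I_n -> pauli T k),
    (forall i, A (h i)) /\
    peq P (fun t j b => \sum_(i < n) c i * h i t j b).

(* commutation phase exponent at one site: P_t Q_t = exp(2 pi i loc) Q_t P_t *)
Definition loc (p q : 'I_k -> bool -> int) : rat :=
  \sum_(j < k) ((p j false * q j true - p j true * q j false)%:~R / (d j)%:R).

Definition site := (int * int)%type.

Definition finsupp (P : pauli site k) : Prop :=
  exists s : seq site, forall t, in_supp P t -> t \in s.

Definition commP (P Q : pauli site k) : Prop :=
  exists s : seq site, uniq s /\ (forall t, in_supp P t -> t \in s) /\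
    (\sum_(t <- s) loc (P t) (Q t)) \is a Num.int.

Definition linlt (m : nat) (A : site -> Prop) : Prop :=
  exists (s : nat) (a b : int), (s < m)%N /\
    forall x y, A (x, y) -> a <= x < a + s%:Z /\ b <= y < b + s%:Z.

Definition placeP (w : nat) (g : nat -> nat -> 'I_k -> bool -> int)
  (a b : int) : pauli site k :=
  fun t j e =>
    if (a <= t.1 < a + w%:Z) && (b <= t.2 < b + w%:Z)
    then g `|t.1 - a|%N `|t.2 - b|%N j e else 0.

Definition tsite (L : nat) := ('I_L * 'I_L)%type.

Definition commT (L : nat) (P Q : pauli (tsite L) k) : Prop :=
  (\sum_(t : tsite L) loc (P t) (Q t)) \is a Num.int.

Definition linltT (L : nat) (m : nat) (A : tsite L -> Prop) : Prop :=
  exists (s : nat) (a b : 'I_L), (s < m)%N /\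
    forall t, A t -> exists u v, [/\ (u < s)%N, (v < s)%N,
       val t.1 = ((a + u) %% L)%N & val t.2 = ((b + v) %% L)%N].

Definition placeT (L : nat) (w : nat) (g : nat -> nat -> 'I_k -> bool -> int)
  (a b : 'I_L) : pauli (tsite L) k :=
  fun t j e =>
    \sum_(u < w) \sum_(v < w)
      (if (val t.1 == ((a + u) %% L)%N) && (val t.2 == ((b + v) %% L)%N)
       then g u v j e else 0).

Definition trunc (L : nat) (R : {set tsite L}) (P : pauli (tsite L) k)
  : pauli (tsite L) k :=
  fun t j e => if t \in R then P t j e else 0.

End Pauli.

Section Code.
Variables (k : nat) (d : 'I_k -> nat) (w m : nat)
  (g : 'I_m -> nat -> nat -> 'I_k -> bool -> int).

Definition gaugeP : pauli site k -> Prop :=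
  gen d (fun P => exists i a b, P = @placeP k w (g i) a b).

Definition stabP (P : pauli site k) : Prop :=
  gaugeP P /\ forall Q, gaugeP Q -> commP d P Q.

Variable (L : nat).

Definition gaugeT : pauli (tsite L) k -> Prop :=
  gen d (fun P => exists i a b, P = @placeT k L w (g i) a b).

Definition stabT (P : pauli (tsite L) k) : Prop :=
  gaugeT P /\ forall Q, gaugeT Q -> commT d P Q.

Definition stabT_loc (lS : nat) : pauli (tsite L) k -> Prop :=
  gen d (fun P => stabT P /\ linltT lS (in_supp d P)).

End Code.

From mathcomp Require Import all_boot all_order all_algebra.
From mathcomp Require Import zify ring.
Set Implicit Arguments. Unset Strict Implicit. Unset Printing Implicit Defensive.
Import Order.TTheory GRing.Theory Num.Theory.
Local Open Scope ring_scope.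

(* If P is a gauge operator supported in R, its commutation phase with a
   stabilizer and with the truncation of that stabilizer to R differ by an
   integer, and stabilizers are central in the gauge group.
   Conversely, lift P to the plane inside a box of side s < L - lS.  A local
   stabilizer S of the plane lives in a box of side < lS; wrapped onto the
   torus it becomes a local torus stabilizer X.  Since both boxes together
   are smaller than the torus, the phase of P with the truncation of X to R
   is the phase of the lift of P with S.  So the lift commutes with every
   plane stabilizer, hence by (iii) it is a plane gauge operator, and
   wrapping it back exhibits P as a torus gauge operator. *)

Lemma int_eq_of_subr_int (R : archiNumDomainType) (x y : R) :
  x - y \is a Num.int -> (x \is a Num.int) = (y \is a Num.int).
Proof.
move=> hxy; apply/idP/idP => h; last by rewrite -(subrK y x) rpredD.
by rewrite -[y](opprK) -[- y](addKr x) opprD opprK rpredD // rpredN.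
Qed.

Section PauliGroup.
Variables (k : nat) (d : 'I_k -> nat).

Lemma dvd_notin_supp (T : Type) (P : pauli T k) t :
  ~ in_supp d P t -> forall j b, ((d j)%:Z %| P t j b)%Z.
Proof. by move=> h j b; apply/negPn/negP => nd; apply: h; exists j, b. Qed.

Lemma peq_dvdP (T : Type) (P Q : pauli T k) :
  peq d P Q <-> forall t j b, ((d j)%:Z %| P t j b - Q t j b)%Z.
Proof. by split=> h t j b; [rewrite -eqz_mod_dvd | rewrite eqz_mod_dvd]. Qed.

Lemma mem_gen (T : Type) (A : pauli T k -> Prop) (P : pauli T k) : A P -> gen d A P.
Proof.
move=> hA; exists 1%N, (fun _ => 1), (fun _ => P); split => //.
by apply/peq_dvdP => t j b; rewrite big_ord1 mul1r subrr dvdz0.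
Qed.

Lemma gen_congr (T : Type) (A : pauli T k -> Prop) (P Q : pauli T k) :
  (forall t j b, ((d j)%:Z %| P t j b - Q t j b)%Z) -> gen d A Q -> gen d A P.
Proof.
move=> hPQ [n [c [h [hA /peq_dvdP hQ]]]]; exists n, c, h; split => //.
apply/peq_dvdP => t j b; rewrite -[P t j b](subrK (Q t j b)) -addrA.
by rewrite rpredD.
Qed.

End PauliGroup.

Section CommutationForm.
Variables (k : nat) (d : 'I_k -> nat).
Hypothesis d_gt0 : forall j, (0 < d j)%N.

Lemma eq_locl p p' q : p =2 p' -> loc d p q = loc d p' q.
Proof. by move=> e; apply: eq_bigr => j _; rewrite !e. Qed.

Lemma eq_locr p q q' : q =2 q' -> loc d p q = loc d p q'.
Proof. by move=> e; apply: eq_bigr => j _; rewrite !e. Qed.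

Lemma loc_antisym p q : loc d q p = - loc d p q.
Proof.
rewrite /loc -sumrN; apply: eq_bigr => j _.
by rewrite -[RHS]mulNr -intrN; congr (_%:~R / _); ring.
Qed.

Lemma loc_sumr p (I : Type) (r : seq I) (F : I -> 'I_k -> bool -> int) :
  loc d p (fun j b => \sum_(i <- r) F i j b) = \sum_(i <- r) loc d p (F i).
Proof.
rewrite /loc exchange_big /=; apply: eq_bigr => j _.
rewrite -mulr_suml; congr (_ / _).
by rewrite -rmorph_sum /= !mulr_sumr -sumrB.
Qed.

Lemma loc_suml (I : Type) (r : seq I) (F : I -> 'I_k -> bool -> int) q :
  loc d (fun j b => \sum_(i <- r) F i j b) q = \sum_(i <- r) loc d (F i) q.
Proof.
rewrite loc_antisym loc_sumr -sumrN; apply: eq_bigr => i _.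
by rewrite loc_antisym opprK.
Qed.

Lemma loc_linr p n (c : 'I_n -> int) (h : 'I_n -> 'I_k -> bool -> int) :
  loc d p (fun j b => \sum_(i < n) c i * h i j b) = \sum_(i < n) (c i)%:~R * loc d p (h i).
Proof.
rewrite loc_sumr; apply: eq_bigr => i _; rewrite /loc mulr_sumr.
by apply: eq_bigr => j _; rewrite [RHS]mulrA -intrM; congr (_%:~R / _); ring.
Qed.

Lemma loc_ifl (C : bool) p q :
  loc d (fun j b => if C then p j b else 0) q = if C then loc d p q else 0.
Proof.
case: C; first exact: eq_locl.
by rewrite /loc big1 // => j _; rewrite !mul0r.
Qed.

Lemma loc_dvdr_int p q :
  (forall j b, ((d j)%:Z %| q j b)%Z) -> loc d p q \is a Num.int.
Proof.
move=> h; apply: rpred_sum => j _.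
have [x ->] := dvdzP (h j true); have [y ->] := dvdzP (h j false).
rewrite !mulrA -mulrBl intrM mulfK ?intr_int //.
by rewrite pnatr_eq0 -lt0n d_gt0.
Qed.

Lemma loc_dvdl_int p q :
  (forall j b, ((d j)%:Z %| p j b)%Z) -> loc d p q \is a Num.int.
Proof. by move=> h; rewrite loc_antisym rpredN loc_dvdr_int. Qed.

Lemma loc_congr_int p q q' : (forall j b, ((d j)%:Z %| q j b - q' j b)%Z) ->
  loc d p q - loc d p q' \is a Num.int.
Proof.
move=> h; have -> : loc d p q - loc d p q' = loc d p (fun j b => q j b - q' j b).
  rewrite /loc -sumrB; apply: eq_bigr => j _.
  by rewrite -mulrBl -intrB; congr (_%:~R / _); ring.
exact: loc_dvdr_int.
Qed.

Lemma loc_congl_int p p' q : (forall j b, ((d j)%:Z %| p j b - p' j b)%Z) ->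
  loc d p q - loc d p' q \is a Num.int.
Proof. by move=> h; rewrite !(loc_antisym q) -opprD rpredN loc_congr_int. Qed.

End CommutationForm.

Section TorusPhase.
Variables (k : nat) (d : 'I_k -> nat).
Hypothesis d_gt0 : forall j, (0 < d j)%N.
Variable L : nat.

Definition phaseT (P Q : pauli (tsite L) k) : rat :=
  \sum_(t : tsite L) loc d (P t) (Q t).

Lemma commTE P Q : commT d P Q = (phaseT P Q \is a Num.int).
Proof. by []. Qed.

Lemma phaseT_antisym P Q : phaseT P Q = - phaseT Q P.
Proof. by rewrite /phaseT -sumrN; apply: eq_bigr => t _; rewrite loc_antisym. Qed.

Lemma phaseT_gen (A : pauli (tsite L) k -> Prop) X Q :
  (forall h, A h -> phaseT X h \is a Num.int) -> gen d A Q -> phaseT X Q \is a Num.int.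
Proof.
move=> hA [n [c [h [hh /peq_dvdP hQ]]]].
rewrite (@int_eq_of_subr_int _ _ (phaseT X (fun t j b => \sum_(i < n) c i * h i t j b))).
  rewrite /phaseT; under eq_bigr => t _ do rewrite loc_linr.
  rewrite exchange_big; apply: rpred_sum => i _.
  by rewrite -mulr_sumr rpredM ?intr_int ?hA.
by rewrite /phaseT -sumrB; apply: rpred_sum => t _; apply: loc_congr_int.
Qed.

Lemma comm_trunc_of_gaugeT w m (g : 'I_m -> nat -> nat -> 'I_k -> bool -> int) lS
    (R : {set tsite L}) P :
  gaugeT d w g P -> supp_in d P (fun t => t \in R) ->
  forall Q, stabT_loc d w g lS Q -> commT d P (trunc R Q).
Proof.
move=> hP hPR Q hQ; rewrite commTE (@int_eq_of_subr_int _ _ (phaseT P Q)).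
  apply: phaseT_gen hQ => h [[_ hcomm] _].
  by rewrite phaseT_antisym rpredN -commTE; apply: hcomm.
rewrite /phaseT -sumrB; apply: rpred_sum => t _; rewrite /trunc.
case: (boolP (t \in R)) => tR; first by rewrite subrr.
have hPt : ~ in_supp d P t by move/hPR; apply/negP.
have {}hPt := dvd_notin_supp hPt.
by rewrite rpredB ?loc_dvdl_int.
Qed.

End TorusPhase.

Section Boxes.
Variables (k w : nat).

Definition inbox (c e : int) (N : nat) (p : site) : bool :=
  (c <= p.1 < c + N%:Z) && (e <= p.2 < e + N%:Z).

Definition box_supported (c e : int) (N : nat) (F : pauli site k) : Prop :=
  forall p j b, F p j b != 0 -> inbox c e N p.

Definition cut (c e : int) (N : nat) (F : pauli site k) : pauli site k :=
  fun p j b => if inbox c e N p then F p j b else 0.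

Lemma box_supported_cut c e N F : box_supported c e N (cut c e N F).
Proof. by move=> p j b; rewrite /cut; case: ifP. Qed.

Lemma box_supported_placeP (g' : nat -> nat -> 'I_k -> bool -> int) a b :
  box_supported a b w (placeP w g' a b).
Proof. by move=> p j e; rewrite /placeP /inbox; case: ifP. Qed.

Lemma placeP_shift (g' : nat -> nat -> 'I_k -> bool -> int) a b x y s r :
  placeP w g' a b (x + s, y + r) = placeP w g' (a - s) (b - r) (x, y).
Proof.
rewrite /placeP /=.
have -> : (a <= x + s < a + w%:Z) = (a - s <= x < a - s + w%:Z) by apply/idP/idP; lia.
have -> : (b <= y + r < b + w%:Z) = (b - r <= y < b - r + w%:Z) by apply/idP/idP; lia.
by rewrite (_ : x + s - a = x - (a - s)) 1?(_ : y + r - b = y - (b - r)) //; ring.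
Qed.

Definition box_cells (c e : int) (N : nat) : seq site :=
  [seq (c + u%:Z, e + v%:Z) | u <- iota 0 N, v <- iota 0 N].

Lemma box_cells_uniq c e N : uniq (box_cells c e N).
Proof.
apply: allpairs_uniq; try exact: iota_uniq.
move=> [u1 v1] [u2 v2] _ _ /= [] h1 h2.
by congr pair; apply/eqP; rewrite -eqz_nat; apply/eqP; lia.
Qed.

Lemma mem_box_cells c e N p : (p \in box_cells c e N) = inbox c e N p.
Proof.
apply/allpairsP/idP => [[[u v] [/= hu hv ->]] | ].
  move: hu hv; rewrite !mem_iota !add0n => /andP[_ hu] /andP[_ hv].
  by rewrite /inbox /=; apply/andP; split; apply/andP; split; lia.
case: p => x y; rewrite /inbox /= => /andP[/andP[h1 h2] /andP[h3 h4]].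
exists (absz (x - c)%R, absz (y - e)%R).
by split => /=; rewrite ?mem_iota; try (apply/andP; split; lia); congr pair; lia.
Qed.

Lemma sum_box_cells c e N (h : site -> rat) :
  \sum_(p <- box_cells c e N) h p = \sum_(u < N) \sum_(v < N) h (c + u%:Z, e + v%:Z).
Proof.
rewrite big_allpairs_dep /= -(big_mkord xpredT (fun u => \sum_(v < N) h (c + u%:Z, e + v%:Z))).
rewrite /index_iota subn0; apply: eq_bigr => u _.
by rewrite -(big_mkord xpredT (fun v => h (c + u%:Z, e + v%:Z))) /index_iota subn0.
Qed.

Lemma linlt_inbox n (A : site -> Prop) :
  linlt n A -> exists N c e, (N < n)%N /\ forall p, A p -> inbox c e N p.
Proof.
case=> N [c [e [hN hA]]]; exists N, c, e; split => // -[x y] /hA [hx hy].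
by rewrite /inbox /= hx hy.
Qed.

End Boxes.

Section PlanePhase.
Variables (k : nat) (d : 'I_k -> nat).
Hypothesis d_gt0 : forall j, (0 < d j)%N.

Lemma in_supp_box c e N F p : box_supported c e N F -> in_supp d F p -> inbox c e N p.
Proof.
move=> hF [j [b hjb]]; apply: (hF p j b); apply: contraNneq hjb => ->.
exact: dvdz0.
Qed.

Lemma cut_congr c e N F : (forall p, in_supp d F p -> inbox c e N p) ->
  forall p j b, ((d j)%:Z %| cut c e N F p j b - F p j b)%Z.
Proof.
move=> hF p j b; rewrite /cut; case: (boolP (inbox c e N p)) => hp; first by rewrite subrr.
by rewrite sub0r rpredN; apply: dvd_notin_supp => /hF; apply/negP.
Qed.

Definition phaseB (c e : int) (N : nat) (F G : pauli site k) : rat :=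
  \sum_(u < N) \sum_(v < N) loc d (F (c + u%:Z, e + v%:Z)) (G (c + u%:Z, e + v%:Z)).

Lemma phaseB_congl c e N F F' G :
  (forall p j b, ((d j)%:Z %| F p j b - F' p j b)%Z) ->
  phaseB c e N F G - phaseB c e N F' G \is a Num.int.
Proof.
move=> hF; rewrite /phaseB -sumrB; apply: rpred_sum => u _.
by rewrite -sumrB; apply: rpred_sum => v _; apply: loc_congl_int.
Qed.

Lemma phaseB_congr c e N F G G' :
  (forall p j b, ((d j)%:Z %| G p j b - G' p j b)%Z) ->
  phaseB c e N F G - phaseB c e N F G' \is a Num.int.
Proof.
move=> hG; rewrite /phaseB -sumrB; apply: rpred_sum => u _.
by rewrite -sumrB; apply: rpred_sum => v _; apply: loc_congr_int.
Qed.

Lemma phaseB_gen c e N F (A : pauli site k -> Prop) G :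
  (forall h, A h -> phaseB c e N F h \is a Num.int) -> gen d A G ->
  phaseB c e N F G \is a Num.int.
Proof.
move=> hA [n [cc [h [hh /peq_dvdP hG]]]].
rewrite (@int_eq_of_subr_int _ _ (phaseB c e N F (fun p j b => \sum_(i < n) cc i * h i p j b))).
  rewrite /phaseB; under eq_bigr => u _ do under eq_bigr => v _ do rewrite loc_linr.
  under eq_bigr => u _ do rewrite exchange_big; rewrite exchange_big.
  apply: rpred_sum => i _; under eq_bigr => u _ do rewrite -mulr_sumr.
  by rewrite -mulr_sumr rpredM ?intr_int ?hA.
rewrite /phaseB -sumrB; apply: rpred_sum => u _; rewrite -sumrB; apply: rpred_sum => v _.
exact: loc_congr_int.
Qed.

Definition in_suppb (F : pauli site k) (t : site) : bool :=
  [exists j, exists b, ~~ ((d j)%:Z %| F t j b)%Z].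

Lemma in_suppbP F t : reflect (in_supp d F t) (in_suppb F t).
Proof.
apply: (iffP existsP) => [[j /existsP [b h]] | [j [b h]]]; first by exists j, b.
by exists j; apply/existsP; exists b.
Qed.

Lemma phase_seq_congr (F G : pauli site k) (s1 s2 : seq site) :
  uniq s1 -> uniq s2 -> (forall t, in_supp d F t -> t \in s1) ->
  (forall t, in_supp d F t -> t \in s2) ->
  \sum_(t <- s1) loc d (F t) (G t) - \sum_(t <- s2) loc d (F t) (G t) \is a Num.int.
Proof.
move=> u1 u2 c1 c2; rewrite [X in X - _](bigID (in_suppb F)) [X in _ - X](bigID (in_suppb F)) /=.
have -> : \sum_(t <- s1 | in_suppb F t) loc d (F t) (G t)
        = \sum_(t <- s2 | in_suppb F t) loc d (F t) (G t).
  rewrite -[LHS]big_filter -[RHS]big_filter; apply/perm_big/uniq_perm; rewrite ?filter_uniq //.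
  by move=> t; rewrite !mem_filter; case: in_suppbP => // /[dup] /c1 -> /c2 ->.
have offsupp s : \sum_(t <- s | ~~ in_suppb F t) loc d (F t) (G t) \is a Num.int.
  by apply: rpred_sum => t /in_suppbP ht; apply/loc_dvdl_int/dvd_notin_supp.
by rewrite opprD addrACA subrr add0r rpredB.
Qed.

Lemma commP_phaseB c e N F G :
  (forall t, in_supp d F t -> inbox c e N t) ->
  commP d F G <-> phaseB c e N F G \is a Num.int.
Proof.
move=> hF; have hcells t : in_supp d F t -> t \in box_cells c e N.
  by move/hF; rewrite mem_box_cells.
split=> [[s [us [cs hs]]] | hB].
  rewrite /phaseB -(sum_box_cells c e N (fun p => loc d (F p) (G p))).
  by rewrite (int_eq_of_subr_int (@phase_seq_congr F G _ _ (box_cells_uniq c e N) us hcells cs)).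
exists (box_cells c e N); split; first exact: box_cells_uniq.
by split => //; rewrite sum_box_cells.
Qed.

End PlanePhase.

Section Periodic.
Variable L : nat.
Hypothesis L_gt0 : (0 < L)%N.

Definition zmodn (z : int) : nat := `|(z %% L%:Z)%Z|%N.

Lemma zmodnE z : (zmodn z)%:Z = (z %% L%:Z)%Z.
Proof. by rewrite /zmodn gez0_abs // modz_ge0 //; apply/eqP; lia. Qed.

Lemma zmodn_lt z : (zmodn z < L)%N.
Proof. by rewrite -ltz_nat zmodnE ltz_pmod // ltz_nat. Qed.

Lemma zmodn_nat (n : nat) : zmodn n%:Z = (n %% L)%N.
Proof. by rewrite /zmodn modz_nat. Qed.

Lemma eq_zmodn x y : (zmodn x == zmodn y) = (L%:Z %| y - x)%Z.
Proof. by rewrite -eqz_nat !zmodnE -eqz_mod_dvd eq_sym. Qed.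

Lemma zmodn_addn (c : int) (u : nat) : zmodn (c + u%:Z) = ((zmodn c + u) %% L)%N.
Proof.
apply/eqP; rewrite -eqz_nat zmodnE -modz_nat PoszD zmodnE.
by apply/eqP; rewrite modzDml.
Qed.

Lemma sum_lifts_indicator (V : zmodType) (x y : int) (M : nat) (a : V) :
  `|y - x| < (M.+1 * L)%:Z ->
  \sum_(i < (2 * M).+1) (if x + L%:Z * (i%:Z - M%:Z) == y then a else 0)
  = if zmodn x == zmodn y then a else 0.
Proof.
move=> hyx; rewrite -big_mkcond /= eq_zmodn.
have L_gt0' : 0 < L%:Z by rewrite ltz_nat.
case: (boolP (L%:Z %| y - x)%Z) => hdvd; last first.
  rewrite big_pred0 // => i; apply/negbTE/negP => /eqP hi.
  by move/negP: hdvd; apply; rewrite -hi addrAC subrr add0r dvdz_mulr.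
have hq := divzK hdvd; set q := ((y - x) %/ L%:Z)%Z in hq.
have hqM : -(M%:Z) <= q <= M%:Z.
  by move: hyx; rewrite -hq PoszM normrM (gtr0_norm L_gt0') ltr_pM2r //; lia.
have hi0 : (absz (q + M%:Z)%R < (2 * M).+1)%N by lia.
rewrite (big_pred1 (Ordinal hi0)) // => i /=.
apply/eqP/eqP => [hi | ->]; last first.
  by rewrite /= gez0_abs ?addrK ?[L%:Z * _]mulrC ?hq ?[x + _]addrC ?subrK //; lia.
apply: val_inj => /=.
have : L%:Z * (i%:Z - M%:Z) = q * L%:Z by rewrite hq -hi addrAC subrr add0r.
by rewrite mulrC => /mulIf => /(_ (lt0r_neq0 L_gt0')) ?; lia.
Qed.

Lemma sum_window_indicator (V : zmodType) (f : int -> V) (c : int) (N : nat) z :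
  (forall z, f z != 0 -> c <= z < c + N%:Z) ->
  f z = \sum_(u < N) (if z == c + u%:Z then f (c + u%:Z) else 0).
Proof.
move=> hf.
rewrite (eq_bigr (fun u : 'I_N => if z == c + u%:Z then f z else 0)); last first.
  by move=> u _; case: eqP => // ->.
rewrite -big_mkcond /=; have [-> | nz] := eqVneq (f z) 0; first by rewrite big1.
have /andP[hcz hzc] := hf z nz.
have hu : (absz (z - c)%R < N)%N by lia.
rewrite (big_pred1 (Ordinal hu)) // => u /=.
by apply/eqP/eqP => [e | ->]; [apply: val_inj => /=; lia | rewrite /=; lia].
Qed.

Lemma sum_md_window_lifts (V : zmodType) (f : int -> V) (c x : int) (N M : nat) :
  (forall z, f z != 0 -> c <= z < c + N%:Z) ->
  (forall u : nat, (u < N)%N -> `|c + u%:Z - x| < (M.+1 * L)%:Z) ->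
  \sum_(u < N) (if zmodn x == zmodn (c + u%:Z) then f (c + u%:Z) else 0)
  = \sum_(i < (2 * M).+1) f (x + L%:Z * (i%:Z - M%:Z)).
Proof.
move=> hf hx.
under [RHS]eq_bigr => i _ do rewrite (sum_window_indicator _ hf).
rewrite exchange_big /=; apply: eq_bigr => u _.
by rewrite sum_lifts_indicator ?hx.
Qed.

Lemma sum_md_window_lifts2 (V : zmodType) (G : int -> int -> V) (c e x y : int) (N M : nat) :
  (forall z z', G z z' != 0 -> (c <= z < c + N%:Z) && (e <= z' < e + N%:Z)) ->
  (forall u : nat, (u < N)%N -> `|c + u%:Z - x| < (M.+1 * L)%:Z) ->
  (forall u : nat, (u < N)%N -> `|e + u%:Z - y| < (M.+1 * L)%:Z) ->
  \sum_(u < N) \sum_(v < N)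
     (if (zmodn x == zmodn (c + u%:Z)) && (zmodn y == zmodn (e + v%:Z))
      then G (c + u%:Z) (e + v%:Z) else 0)
  = \sum_(i < (2 * M).+1) \sum_(i' < (2 * M).+1)
      G (x + L%:Z * (i%:Z - M%:Z)) (y + L%:Z * (i'%:Z - M%:Z)).
Proof.
move=> hG hx hy.
pose F z := \sum_(v < N) (if zmodn y == zmodn (e + v%:Z) then G z (e + v%:Z) else 0).
transitivity (\sum_(u < N) (if zmodn x == zmodn (c + u%:Z) then F (c + u%:Z) else 0)).
  apply: eq_bigr => u _; case: (zmodn x == zmodn _); last by rewrite big1.
  by apply: eq_bigr.
rewrite (@sum_md_window_lifts _ F c x N M) //; last first.
  move=> z; apply: contraNT => hz; apply/eqP/big1 => v _; case: ifP => // _.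
  by apply/eqP; apply: contraNT hz => /hG /andP[].
apply: eq_bigr => i _; rewrite /F (@sum_md_window_lifts _ _ e y N M) //.
by move=> z' /hG /andP[].
Qed.

End Periodic.

Section Wrap.
Variables (k : nat) (d : 'I_k -> nat) (L w : nat).
Hypothesis L_gt0 : (0 < L)%N.

Definition ord_mod (z : int) : 'I_L := Ordinal (zmodn_lt L_gt0 z).

Definition proj_torus (p : site) : tsite L := (ord_mod p.1, ord_mod p.2).

Lemma ord_mod_nat (a : 'I_L) : ord_mod a = a.
Proof. by apply: val_inj; rewrite /= zmodn_nat modn_small. Qed.

Lemma proj_torus_nat (t : tsite L) : proj_torus (t.1 : int, t.2 : int) = t.
Proof. by case: t => t1 t2; rewrite /proj_torus /= !ord_mod_nat. Qed.

(* Only the cells of the box are pushed to the torus: this is the image of F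
   when F is supported in the box. *)
Definition wrap (c e : int) (N : nat) (F : pauli site k) : pauli (tsite L) k :=
  fun t j b => \sum_(u < N) \sum_(v < N)
    (if (val t.1 == zmodn L (c + u%:Z)) && (val t.2 == zmodn L (e + v%:Z))
     then F (c + u%:Z, e + v%:Z) j b else 0).

Definition lift_sum (M : nat) (F : pauli site k) (p : site) : 'I_k -> bool -> int :=
  fun j b => \sum_(i < (2 * M).+1) \sum_(i' < (2 * M).+1)
    F (p.1 + L%:Z * (i%:Z - M%:Z), p.2 + L%:Z * (i'%:Z - M%:Z)) j b.

Lemma wrap_proj_torus c e N F M p :
  box_supported c e N F ->
  (forall u : nat, (u < N)%N -> `|c + u%:Z - p.1| < (M.+1 * L)%:Z) ->
  (forall u : nat, (u < N)%N -> `|e + u%:Z - p.2| < (M.+1 * L)%:Z) ->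
  forall j b, wrap c e N F (proj_torus p) j b = lift_sum M F p j b.
Proof.
move=> hF h1 h2 j b; rewrite /wrap /lift_sum /=.
apply: (@sum_md_window_lifts2 L L_gt0 _ (fun z z' => F (z, z') j b)) => //.
by move=> z z' /hF.
Qed.

Lemma wrap_proj_torus_near c e N F p :
  box_supported c e N F ->
  (forall u : nat, (u < N)%N -> `|c + u%:Z - p.1| < L%:Z) ->
  (forall u : nat, (u < N)%N -> `|e + u%:Z - p.2| < L%:Z) ->
  forall j b, wrap c e N F (proj_torus p) j b = F p j b.
Proof.
move=> hF h1 h2 j b; rewrite (@wrap_proj_torus _ _ _ _ 0) ?mul1n //.
by rewrite /lift_sum !big_ord1 !subrr mulr0 !addr0; case: p {h1 h2}.
Qed.

Lemma placeT_wrap (g' : nat -> nat -> 'I_k -> bool -> int) (a b : int) :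
  forall t j e, placeT w g' (ord_mod a) (ord_mod b) t j e = wrap a b w (placeP w g' a b) t j e.
Proof.
move=> t j e; apply: eq_bigr => u _; apply: eq_bigr => v _.
rewrite /= !zmodn_addn //; case: ifP => // _.
have hu := ltn_ord u; have hv := ltn_ord v.
rewrite /placeP /= ifT; last by apply/andP; split; apply/andP; split; lia.
by rewrite ![_ + _%:Z - _]addrAC !subrr !add0r.
Qed.

Lemma placeT_lift_sum (g' : nat -> nat -> 'I_k -> bool -> int) (a b : int) (p : site) (M : nat) :
  (absz a + absz b + absz p.1 + absz p.2 + w <= M)%N ->
  forall j e, placeT w g' (ord_mod a) (ord_mod b) (proj_torus p) j e
              = lift_sum M (placeP w g' a b) p j e.
Proof.
move=> hM j e; have hML := leq_pmulr M.+1 L_gt0.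
rewrite placeT_wrap (wrap_proj_torus (M := M) (@box_supported_placeP _ w g' a b)) //.
all: by case: p hM => p1 p2 /= hM u hu; move: hML; set ML := (M.+1 * L)%N; lia.
Qed.

Lemma placeT_sum_translates (g' : nat -> nat -> 'I_k -> bool -> int) (a b : 'I_L) (p : site) M :
  (a + b + absz p.1 + absz p.2 + w <= M)%N ->
  forall j e, placeT w g' a b (proj_torus p) j e =
    \sum_(i < (2 * M).+1) \sum_(i' < (2 * M).+1)
      placeP w g' (a%:Z - L%:Z * (i%:Z - M%:Z)) (b%:Z - L%:Z * (i'%:Z - M%:Z)) p j e.
Proof.
move=> hM j e; rewrite -{1}(ord_mod_nat a) -{1}(ord_mod_nat b).
rewrite (@placeT_lift_sum _ _ _ _ M) /=; last by lia.
apply: eq_bigr => i _; apply: eq_bigr => i' _.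
by rewrite placeP_shift; case: p {hM}.
Qed.

Lemma lift_sum_lin M n (c : 'I_n -> int) (h : 'I_n -> pauli site k) p j b :
  lift_sum M (fun p j b => \sum_(i < n) c i * h i p j b) p j b
  = \sum_(i < n) c i * lift_sum M (h i) p j b.
Proof.
symmetry; under eq_bigr => i _ do rewrite mulr_sumr.
rewrite exchange_big; apply: eq_bigr => i1 _.
by under eq_bigr => i _ do rewrite mulr_sumr; rewrite exchange_big.
Qed.

Lemma lift_sum_congr M (F F' : pauli site k) p j b :
  (forall p, ((d j)%:Z %| F p j b - F' p j b)%Z) ->
  ((d j)%:Z %| lift_sum M F p j b - lift_sum M F' p j b)%Z.
Proof.
move=> hFF'; rewrite /lift_sum -sumrB; apply: rpred_sum => i _.
by rewrite -sumrB; apply: rpred_sum.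
Qed.

Lemma gaugeT_wrap m (g : 'I_m -> nat -> nat -> 'I_k -> bool -> int) c e N F :
  box_supported c e N F -> gaugeP d w g F -> gaugeT d w g (wrap c e N F).
Proof.
move=> hF [n [cc [h [hh /peq_dvdP hFh]]]].
have /fin_all_exists [x hx] :
    forall i, exists x : 'I_m * int * int, h i = placeP w (g x.1.1) x.1.2 x.2.
  by move=> i; have [i' [a [b ->]]] := hh i; exists (i', a, b).
(* With this M, lift_sum M counts every translate of F and of each generator
   that can meet the lift of t. *)
pose M := (absz c + absz e + N + w + 2 * L + \max_(i < n) (absz (x i).1.2 + absz (x i).2))%N.
exists n, cc, (fun i => placeT w (g (x i).1.1) (ord_mod (x i).1.2) (ord_mod (x i).2)).
split; first by move=> i; exists (x i).1.1, (ord_mod (x i).1.2), (ord_mod (x i).2).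
apply/peq_dvdP => t j b.
have ht1 := ltn_ord t.1; have ht2 := ltn_ord t.2; have hML := leq_pmulr M.+1 L_gt0.
have hplace i : placeT w (g (x i).1.1) (ord_mod (x i).1.2) (ord_mod (x i).2) t j b
                = lift_sum M (h i) (t.1 : int, t.2 : int) j b.
  rewrite -{1}(proj_torus_nat t) hx (@placeT_lift_sum _ _ _ _ M) //=.
  have := @leq_bigmax _ (fun i => (absz (x i).1.2 + absz (x i).2)%N) i; rewrite /M /=; lia.
under eq_bigr => i _ do rewrite hplace.
rewrite -{1}(proj_torus_nat t) (wrap_proj_torus (M := M) hF); first last.
- by move=> u hu /=; move: hML; set ML := (_.+1 * L)%N; rewrite /M; lia.
- by move=> u hu /=; move: hML; set ML := (_.+1 * L)%N; rewrite /M; lia.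
by rewrite -lift_sum_lin; apply: lift_sum_congr.
Qed.

End Wrap.

Section WrapPhase.
Variables (k : nat) (d : 'I_k -> nat).
Hypothesis d_gt0 : forall j, (0 < d j)%N.
Variables (w m : nat) (g : 'I_m -> nat -> nat -> 'I_k -> bool -> int) (L lS : nat).
Hypothesis L_gt0 : (0 < L)%N.

Lemma phaseT_wrapl c e N F (Y : pauli (tsite L) k) :
  phaseT d (wrap c e N F) Y = \sum_(u < N) \sum_(v < N)
    loc d (F (c + u%:Z, e + v%:Z)) (Y (proj_torus L_gt0 (c + u%:Z, e + v%:Z))).
Proof.
have cell t : loc d (wrap c e N F t) (Y t) = \sum_(u < N) \sum_(v < N)
    (if t == proj_torus L_gt0 (c + u%:Z, e + v%:Z)
     then loc d (F (c + u%:Z, e + v%:Z)) (Y t) else 0).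
  rewrite /wrap loc_suml; apply: eq_bigr => u _.
  by rewrite loc_suml; apply: eq_bigr => v _; rewrite loc_ifl; case: t.
rewrite /phaseT; under eq_bigr => t _ do rewrite cell.
rewrite exchange_big; apply: eq_bigr => u _; rewrite exchange_big; apply: eq_bigr => v _.
by rewrite -big_mkcond big_pred1_eq.
Qed.

Lemma phaseT_wrap_placeT_int c e N F (g' : nat -> nat -> 'I_k -> bool -> int) (a b : 'I_L) :
  box_supported c e N F ->
  (forall a' b', phaseB d c e N F (placeP w g' a' b') \is a Num.int) ->
  phaseT d (wrap c e N F) (placeT w g' a b) \is a Num.int.
Proof.
move=> hF hFg; rewrite phaseT_wrapl.
pose M := (absz c + absz e + 2 * N + a + b + w)%N.
have translates (u v : 'I_N) :
  loc d (F (c + u%:Z, e + v%:Z)) (placeT w g' a b (proj_torus L_gt0 (c + u%:Z, e + v%:Z))) =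
  \sum_(i < (2 * M).+1) \sum_(i' < (2 * M).+1) loc d (F (c + u%:Z, e + v%:Z))
    (placeP w g' (a%:Z - L%:Z * (i%:Z - M%:Z)) (b%:Z - L%:Z * (i'%:Z - M%:Z)) (c + u%:Z, e + v%:Z)).
  rewrite (eq_locr d _ (@placeT_sum_translates _ _ _ L_gt0 g' a b _ M _)); last first.
    by have := ltn_ord u; have := ltn_ord v; rewrite /M /=; lia.
  by rewrite loc_sumr; apply: eq_bigr => i _; rewrite loc_sumr.
under eq_bigr => u _ do under eq_bigr => v _ do rewrite translates.
under eq_bigr => u _ do rewrite exchange_big; rewrite exchange_big.
under eq_bigr => i _ do under eq_bigr => u _ do rewrite exchange_big.
under eq_bigr => i _ do rewrite exchange_big.
by apply: rpred_sum => i _; apply: rpred_sum => i' _; apply: hFg.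
Qed.

Lemma phaseT_wrap_gaugeT_int c e N F :
  box_supported c e N F ->
  (forall i a' b', phaseB d c e N F (placeP w (g i) a' b') \is a Num.int) ->
  forall Q : pauli (tsite L) k, gaugeT d w g Q -> phaseT d (wrap c e N F) Q \is a Num.int.
Proof.
move=> hF hFg Q; apply: phaseT_gen => // _ [i [a [b ->]]].
exact: phaseT_wrap_placeT_int.
Qed.

Lemma linltT_wrap c e N (F : pauli site k) :
  (N < lS)%N -> linltT lS (in_supp d (wrap c e N F : pauli (tsite L) k)).
Proof.
move=> hN; exists N, (ord_mod L_gt0 c), (ord_mod L_gt0 e); split => // t [j [b]].
case: (boolP [exists u : 'I_N, exists v : 'I_N,
    (val t.1 == zmodn L (c + u%:Z)) && (val t.2 == zmodn L (e + v%:Z))]).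
  case/existsP => u /existsP [v /andP[/eqP h1 /eqP h2]] _.
  by exists u, v; rewrite h1 h2 !zmodn_addn.
move=> hnot; rewrite /wrap big1 ?dvdz0 // => u _; rewrite big1 // => v _.
by case: ifP => // hc; case/negP: hnot; apply/existsP; exists u; apply/existsP; exists v.
Qed.

Lemma stabT_loc_wrap_cut S c e N :
  stabP d w g S -> (N < lS)%N -> (forall p, in_supp d S p -> inbox c e N p) ->
  stabT_loc d w g lS (wrap c e N (cut c e N S) : pauli (tsite L) k).
Proof.
move=> [hSg hScomm] hN hS; apply: mem_gen; split; last exact: linltT_wrap.
have hcutg : gaugeP d w g (cut c e N S) by apply: gen_congr hSg; apply: cut_congr.
split; first exact (gaugeT_wrap L_gt0 (@box_supported_cut _ c e N S) hcutg).
move=> Q hQ; rewrite commTE; apply: phaseT_wrap_gaugeT_int hQ => //.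
  exact: box_supported_cut.
move=> i a b; have hplace : gaugeP d w g (placeP w (g i) a b) by apply: mem_gen; exists i, a, b.
rewrite (int_eq_of_subr_int (phaseB_congl d_gt0 c e N (placeP w (g i) a b) (cut_congr hS))).
by apply/(commP_phaseB d_gt0 _ hS); apply: hScomm hplace.
Qed.

End WrapPhase.

Section LiftToPlane.
Variables (k : nat) (d : 'I_k -> nat).
Hypothesis d_gt0 : forall j, (0 < d j)%N.
Variables (w m : nat) (g : 'I_m -> nat -> nat -> 'I_k -> bool -> int) (lS : nat).
Hypothesis stabP_local_gen : forall S, stabP d w g S ->
  gen d (fun Q => stabP d w g Q /\ linlt lS (in_supp d Q)) S.
Hypothesis gaugeP_centralizer : forall P, finsupp d P ->
  ((forall Q, stabP d w g Q -> commP d P Q) <-> gaugeP d w g P).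
Variables (L : nat) (R : {set tsite L}) (s : nat) (a0 b0 : 'I_L).
Hypothesis L_gt0 : (0 < L)%N.
Hypothesis s_lt : (s < L - lS)%N.
Hypothesis R_box : forall t, t \in R -> exists u v, [/\ (u < s)%N, (v < s)%N,
  val t.1 = ((a0 + u) %% L)%N & val t.2 = ((b0 + v) %% L)%N].
Variable P : pauli (tsite L) k.
Hypothesis P_supp : supp_in d P (fun t => t \in R).
Hypothesis P_comm : forall Q, stabT_loc d w g lS Q -> commT d P (trunc R Q).

Local Notation a0z := (nat_of_ord a0 : int).
Local Notation b0z := (nat_of_ord b0 : int).

Definition plane_lift : pauli site k := cut a0z b0z s (fun p => P (proj_torus L_gt0 p)).

Lemma plane_lift_outside p j b : proj_torus L_gt0 p \notin R -> ((d j)%:Z %| plane_lift p j b)%Z.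
Proof.
move=> hp; rewrite /plane_lift /cut; case: ifP => _; last exact: dvdz0.
by apply: dvd_notin_supp => /P_supp; apply/negP.
Qed.

Lemma wrap_plane_lift t j b : ((d j)%:Z %| P t j b - wrap a0z b0z s plane_lift t j b)%Z.
Proof.
case: (boolP (t \in R)) => tR; last first.
  have hPt : ~ in_supp d P t by move/P_supp; apply/negP.
  apply: rpredB; first exact: dvd_notin_supp.
  apply: rpred_sum => u _; apply: rpred_sum => v _.
  case: ifP => [/andP[/eqP h1 /eqP h2] | _]; last exact: dvdz0.
  apply: plane_lift_outside; suff -> : proj_torus L_gt0 (a0z + u%:Z, b0z + v%:Z) = t by [].
  by clear tR hPt; case: t h1 h2 => t1 t2 /= h1 h2; congr pair; apply: val_inj.
have [u [v [hu hv h1 h2]]] := R_box tR.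
have htp : proj_torus L_gt0 (a0z + u%:Z, b0z + v%:Z) = t.
  clear tR; case: t h1 h2 => t1 t2 /= h1 h2.
  by congr pair; apply: val_inj; rewrite /= -PoszD zmodn_nat.
rewrite -{2}htp (wrap_proj_torus_near _ (@box_supported_cut _ _ _ _ _)); first last.
- by move=> u' hu' /=; lia.
- by move=> u' hu' /=; lia.
rewrite /plane_lift /cut ifT ?htp ?subrr // /inbox /=.
by apply/andP; split; apply/andP; split; lia.
Qed.

Lemma phaseT_wrap_plane_lift Y :
  phaseT d P Y - phaseT d (wrap a0z b0z s plane_lift) Y \is a Num.int.
Proof.
rewrite /phaseT -sumrB; apply: rpred_sum => t _.
by apply: loc_congl_int => // j b; apply: wrap_plane_lift.
Qed.

Lemma phaseT_wrap_plane_lift_trunc c e N F :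
  box_supported c e N F -> (N < lS)%N ->
  c < a0z + s%:Z -> a0z < c + N%:Z -> e < b0z + s%:Z -> b0z < e + N%:Z ->
  phaseT d (wrap a0z b0z s plane_lift) (trunc R (wrap c e N F))
  - phaseB d a0z b0z s plane_lift F \is a Num.int.
Proof.
move=> hF hN hc1 hc2 he1 he2; rewrite phaseT_wrapl /phaseB -sumrB.
apply: rpred_sum => u _; rewrite -sumrB; apply: rpred_sum => v _; rewrite /trunc.
have hu := ltn_ord u; have hv := ltn_ord v.
case: (boolP (proj_torus L_gt0 (a0z + u%:Z, b0z + v%:Z) \in R)) => hR; last first.
  by rewrite rpredB // loc_dvdl_int // => j b; apply: plane_lift_outside.
(* As s + N < L, the cell itself is the only preimage of its torus image
   that can meet the box of F. *)
rewrite (eq_locr d _ (q' := F (a0z + u%:Z, b0z + v%:Z))) ?subrr // => j b.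
by rewrite (wrap_proj_torus_near _ hF) // => u' hu' /=; lia.
Qed.

Lemma phaseB_plane_lift_local_int S c e N :
  stabP d w g S -> (N < lS)%N -> (forall p, in_supp d S p -> inbox c e N p) ->
  phaseB d a0z b0z s plane_lift (cut c e N S) \is a Num.int.
Proof.
move=> hS hN hSbox.
have [|apart] := boolP [&& c < a0z + s%:Z, a0z < c + N%:Z, e < b0z + s%:Z & b0z < e + N%:Z].
  case/and4P => hc1 hc2 he1 he2.
  have hX := stabT_loc_wrap_cut d_gt0 L_gt0 hS hN hSbox.
  have hbox := @box_supported_cut _ c e N S.
  rewrite -(int_eq_of_subr_int (phaseT_wrap_plane_lift_trunc hbox hN hc1 hc2 he1 he2)).
  by rewrite -(int_eq_of_subr_int (phaseT_wrap_plane_lift _)) -commTE; apply: P_comm.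
apply: rpred_sum => u _; apply: rpred_sum => v _; apply: loc_dvdr_int => // j b.
have hu := ltn_ord u; have hv := ltn_ord v.
rewrite /cut ifN ?dvdz0 //; apply: contra apart; rewrite /inbox /=.
by case/andP => /andP[? ?] /andP[? ?]; apply/and4P; split; lia.
Qed.

Lemma phaseB_plane_lift_stabP_int S :
  stabP d w g S -> phaseB d a0z b0z s plane_lift S \is a Num.int.
Proof.
move=> /stabP_local_gen; apply: phaseB_gen => // Q [hQ /linlt_inbox [N [c [e [hN hQbox]]]]].
rewrite -(int_eq_of_subr_int (phaseB_congr d_gt0 _ _ _ plane_lift (cut_congr hQbox))).
exact: phaseB_plane_lift_local_int.
Qed.

Lemma gaugeP_plane_lift : gaugeP d w g plane_lift.
Proof.
have hbox t : in_supp d plane_lift t -> inbox a0z b0z s t.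
  exact: in_supp_box (@box_supported_cut _ a0z b0z s _).
apply/gaugeP_centralizer.
  by exists (box_cells a0z b0z s) => t /hbox; rewrite mem_box_cells.
by move=> S hS; apply/(commP_phaseB d_gt0 _ hbox)/phaseB_plane_lift_stabP_int.
Qed.

Lemma gaugeT_of_comm_trunc : gaugeT d w g P.
Proof.
apply: gen_congr wrap_plane_lift _.
exact (gaugeT_wrap L_gt0 (@box_supported_cut _ a0z b0z s _) gaugeP_plane_lift).
Qed.

End LiftToPlane.

Local Close Scope ring_scope.
Unset Implicit Arguments.

Theorem mainTheorem1
  (k : nat) (d : 'I_k -> nat) (hd : forall j, (1 < d j)%N)
  (w m : nat) (g : 'I_m -> nat -> nat -> 'I_k -> bool -> int)
  (lS : nat)
  (* (iii) on the infinite plane: S is generated by stabilizers of linear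
     size < lS, and Z_P(S) is (up to phases) the gauge group *)
  (hSloc : forall P, stabP d w g P ->
     gen d (fun Q => stabP d w g Q /\ linlt lS (in_supp d Q)) P)
  (hZS : forall P, finsupp d P ->
     ((forall Q, stabP d w g Q -> commP d P Q) <-> gaugeP d w g P))
  (L : nat) (R : {set tsite L})
  (hR : linltT (L - lS) (fun t => t \in R)) :
  forall P : pauli (tsite L) k,
    (supp_in d P (fun t => t \in R) /\
       forall Q, @stabT_loc k d w m g L lS Q -> commT d P (trunc R Q))
    <->
    (@gaugeT k d w m g L P /\ supp_in d P (fun t => t \in R)).
Proof.
have d_gt0 j : (0 < d j)%N := ltnW (hd j).
move=> P; split=> [[hPR hPcomm] | [hP hPR]]; last first.
  by split=> //; apply: comm_trunc_of_gaugeT.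
split=> //; case: hR => s [a0 [b0 [hs hRbox]]].
have L_gt0 : (0 < L)%N by apply: leq_ltn_trans (ltn_ord a0).
exact: (gaugeT_of_comm_trunc d_gt0 hSloc hZS L_gt0 hs hRbox hPR hPcomm).
Qed.
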